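(* Let $X,Y$ be topological spaces, $(Z,d)$ a metric space and $\mathcal F\subseteq Z^{X\times Y}$ a family of separately equicontinuous functions, i.e. $\{f(x,\cdot):f\in\mathcal F\}$ is equicontinuous on $Y$ for each $x\in X$ and $\{f(\cdot,y):f\in\mathcal F\}$ is equicontinuous on $X$ for each $y\in Y$. Then $\mathcal F$ is equi-weakly separated (as a family of functions on $X\times Y$ with the product topology).
   Context: A neighborhood assignment on a space $W$ is a family $\{V_w\}_{w\in W}$ of open subsets of $W$ with $w\in V_w$. $\mathcal F\subseteq Z^W$ is equi-weakly separated if for every $\varepsilon>0$ there is a neighborhood assignment $\{V_w\}_{w\in W}$ such that for all $p,q\in W$ and all $f\in\mathcal F$, $(p,q)\in V_q\times V_p$ implies $d(f(p),f(q))<\varepsilon$. A family of functions is equicontinuous on a space if at every point $x$, for each $\varepsilon>0$ there is a neighborhood $U$ of $x$ with $d(f(x'),f(x))<\varepsilon$ for all $x'\in U$ and all members $f$. *)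

From HB Require Import structures.
From mathcomp Require Import all_boot all_order all_algebra.
From mathcomp Require Import all_classical all_reals topology.
Set Implicit Arguments. Unset Strict Implicit. Unset Printing Implicit Defensive.
Import Order.TTheory GRing.Theory Num.Theory.
Local Open Scope classical_set_scope.
Local Open Scope ring_scope.

Definition is_metric (R : realType) (Z : Type) (d : Z -> Z -> R) : Prop :=
  (forall x y, 0 <= d x y) /\
  (forall x y, d x y = 0 <-> x = y) /\
  (forall x y, d x y = d y x) /\
  (forall x y z, d x z <= d x y + d y z).

Definition equicont_family (R : realType) (T : topologicalType) (Z : Type)
  (d : Z -> Z -> R) (G : set (T -> Z)) : Prop :=
  forall (x : T) (eps : R), 0 < eps ->
    exists U : set T, nbhs x U /\
      forall x' f, U x' -> G f -> d (f x') (f x) < eps.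

Definition nbhd_assignment (W : topologicalType) (V : W -> set W) : Prop :=
  forall w, open (V w) /\ V w w.

Definition equi_weakly_separated (R : realType) (W : topologicalType) (Z : Type)
  (d : Z -> Z -> R) (G : set (W -> Z)) : Prop :=
  forall eps : R, 0 < eps ->
    exists V : W -> set W, nbhd_assignment V /\
      forall (p q : W) (f : W -> Z), G f -> V q p -> V p q -> d (f p) (f q) < eps.

From HB Require Import structures.
From mathcomp Require Import all_boot all_order all_algebra.
From mathcomp Require Import all_classical all_reals topology.
Import Order.TTheory GRing.Theory Num.Theory.
Local Open Scope classical_set_scope.
Local Open Scope ring_scope.
Set Implicit Arguments. Unset Strict Implicit.

(* Give every point w = (x, y) an open box on which both slices through w
   vary by less than eps/2, uniformly in f.  If p = (x1, y1) and q = (x2, y2)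
   lie in each other's boxes, the corner (x1, y2) is on the horizontal slice
   of q and on the vertical slice of p, so it is within eps/2 of both f q and
   f p. *)

Lemma metric_lt_half_trans (R : realType) (Z : Type) (d : Z -> Z -> R)
    (a b c : Z) (eps : R) :
  is_metric d -> d c a < eps / 2 -> d c b < eps / 2 -> d a b < eps.
Proof.
move=> [_ [_ [dsym dtri]]] dca dcb.
apply: le_lt_trans (dtri a c b) _.
rewrite [eps]splitr ltrD //.
by rewrite dsym.
Qed.

Section SeparatelyEquicontinuous.
Variables (R : realType) (X Y : topologicalType) (Z : Type).
Variables (d : Z -> Z -> R) (F : set (X * Y -> Z)).
Hypothesis equicontY :
  forall x : X, equicont_family d [set (fun y : Y => f (x, y)) | f in F].
Hypothesis equicontX :
  forall y : Y, equicont_family d [set (fun x : X => f (x, y)) | f in F].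

Lemma slices_equicont_open_nbhs (w : X * Y) (eps : R) : 0 < eps ->
  exists V : set (X * Y), (open V /\ V w) /\
    forall p f, V p -> F f ->
      d (f (p.1, w.2)) (f w) < eps /\ d (f (w.1, p.2)) (f w) < eps.
Proof.
case: w => x y eps0.
have [U [nbhsU closeU]] := equicontX y x eps0.
have [W [nbhsW closeW]] := equicontY x y eps0.
have : nbhs (x, y) (U `*` W) by exists (U, W).
rewrite nbhsE => -[V [oV Vxy] VUW].
exists V; split => // p f Vp Ff.
have [/= Up Wp] := VUW p Vp.
split.
- exact: (closeU p.1 (fun x' => f (x', y)) Up (ex_intro2 _ _ f Ff erefl)).
- exact: (closeW p.2 (fun y' => f (x, y')) Wp (ex_intro2 _ _ f Ff erefl)).
Qed.

End SeparatelyEquicontinuous.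

Theorem corollary3p14 (R : realType) (X Y : topologicalType) (Z : Type)
  (d : Z -> Z -> R) (F : set (X * Y -> Z)) :
  is_metric d ->
  (forall x : X, equicont_family d [set (fun y : Y => f (x, y)) | f in F]) ->
  (forall y : Y, equicont_family d [set (fun x : X => f (x, y)) | f in F]) ->
  equi_weakly_separated d F.
Proof.
move=> dmetric equicontY equicontX eps eps0.
have eps20 : 0 < eps / 2 by rewrite divr_gt0.
have [V HV] := choice (fun w =>
  slices_equicont_open_nbhs equicontY equicontX w eps20).
exists V; split; first by move=> w; have [] := HV w.
move=> [x1 y1] [x2 y2] f Ff Vqp Vpq.
have [_ closeq] := HV (x2, y2).
have [_ closep] := HV (x1, y1).
have [corner_q _] := closeq _ _ Vqp Ff.
have [_ corner_p] := closep _ _ Vpq Ff.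
exact: metric_lt_half_trans dmetric corner_p corner_q.
Qed.
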